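(* There is a deterministic subcubic reduction from the Zero Weight Triangle Parity problem to the Negative Weight Triangle Parity problem.
   Context: Input graphs have $n$ vertices and integer edge weights in $[-M,M]$, $M=\mathrm{poly}(n)$. A triangle is a set of three pairwise adjacent vertices; its weight is the sum of its three edge weights. Zero Weight Triangle Parity: decide whether the number of triangles of weight exactly $0$ is even or odd. Negative Weight Triangle Parity: decide whether the number of triangles of negative weight is even or odd. A subcubic reduction from P to Q is an algorithm solving P on size-$n$ instances using oracle calls to Q on instances of sizes $n_1,\dots,n_t$ such that for every $\varepsilon>0$ there is $\varepsilon'>0$ with the total time, counting each oracle call of size $n_i$ as $n_i^{3-\varepsilon}$, bounded by $O(n^{3-\varepsilon'})$. *)

(* A concrete deterministic word-RAM with an oracle
   instruction, used to state "deterministic subcubic reduction". *)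
From Stdlib Require Import Bool ZArith List Reals Arith.
Import ListNotations.

Definition triples (n : nat) : list (nat * nat * nat) :=
  flat_map (fun i => flat_map (fun j => map (fun k => (i, j, k)) (seq 0 n))
                              (seq 0 n)) (seq 0 n).

Definition tri_count (n : nat) (E : nat -> nat -> bool) (w : nat -> nat -> Z)
  (P : Z -> bool) : nat :=
  length (filter (fun t => match t with (i, j, k) =>
     (i <? j) && (j <? k) && E i j && E i k && E j k
     && P (w i j + w i k + w j k)%Z end) (triples n)).

Definition zero_tri_count n E w := tri_count n E w (fun s => Z.eqb s 0).
Definition neg_tri_count  n E w := tri_count n E w (fun s => Z.ltb s 0).

Definition valid_input (c n : nat) (E : nat -> nat -> bool)
  (w : nat -> nat -> Z) : Prop :=
  (forall i j, i < n -> j < n -> E i j = E j i /\ w i j = w j i) /\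
  (forall i, i < n -> E i i = false) /\
  (forall i j, i < n -> j < n -> E i j = true ->
     (Z.abs (w i j) <= Z.of_nat (n + 1) ^ Z.of_nat c)%Z).

Definition memory := nat -> Z.

Definition upd (m : memory) (a : nat) (v : Z) : memory :=
  fun x => if Nat.eqb x a then v else m x.

(* Register arguments are constant cell addresses; indirect access through
   ILoad/IStore.  IOracle d a: the instance is stored at base address M[a]
   (size m := M[base], adjacency bits, then weights, same layout as the input);
   the oracle's answer (parity of negative triangles) is stored in M[d]. *)
Inductive instr : Type :=
| IConst  (d : nat) (v : Z)
| IAdd    (d a b : nat)
| ISub    (d a b : nat)
| IMul    (d a b : nat)
| IDiv    (d a b : nat)
| IMod    (d a b : nat)
| ILoad   (d a : nat)          (* M[d] := M[M[a]] *)
| IStore  (a s : nat)          (* M[M[a]] := M[s] *)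
| IJz     (a : nat) (t : nat)
| IJmp    (t : nat)
| IOracle (d a : nat)
| IHalt.

(* Input layout: M[0] = n; M[1 + i*n + j] = adjacency bit;
   M[1 + n*n + i*n + j] = weight of edge ij (0 if no edge); else 0. *)
Definition encode (n : nat) (E : nat -> nat -> bool) (w : nat -> nat -> Z)
  : memory := fun a =>
  if Nat.eqb a 0 then Z.of_nat n
  else if a <=? n * n then
    let t := a - 1 in if E (t / n) (t mod n) then 1%Z else 0%Z
  else if a <=? 2 * (n * n) then
    let t := a - 1 - n * n in
    if E (t / n) (t mod n) then w (t / n) (t mod n) else 0%Z
  else 0%Z.

Definition inst_size (m : memory) (b : nat) : nat := Z.to_nat (m b).
Definition inst_E (m : memory) (b : nat) : nat -> nat -> bool :=
  fun i j => negb (Z.eqb (m (b + 1 + i * inst_size m b + j)) 0).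
Definition inst_w (m : memory) (b : nat) : nat -> nat -> Z :=
  fun i j => m (b + 1 + inst_size m b * inst_size m b
                  + i * inst_size m b + j).

Definition oracle_answer (m : memory) (b : nat) : Z :=
  if Nat.odd (neg_tri_count (inst_size m b) (inst_E m b) (inst_w m b))
  then 1%Z else 0%Z.

(* Word bound: every written value must have absolute value <= B
   (words of O(log n) bits); addresses must be nonnegative. *)
Definition wr (B : Z) (d : nat) (v : Z) (m : memory) : option memory :=
  if (Z.abs v <=? B)%Z then Some (upd m d v) else None.

Definition addr (v : Z) : option nat :=
  if (0 <=? v)%Z then Some (Z.to_nat v) else None.

(* One step: None = stuck (error); Some (inl (pc', m', oracle sizes)) =
   continue; Some (inr m) = halted. *)
Definition step (prog : list instr) (B : Z) (pc : nat) (m : memory)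
  : option ((nat * memory * list nat) + memory) :=
  match nth_error prog pc with
  | None => None
  | Some i =>
    let cont := fun om => option_map (fun m' => inl (S pc, m', [])) om in
    match i with
    | IConst d v => cont (wr B d v m)
    | IAdd d a b => cont (wr B d (m a + m b)%Z m)
    | ISub d a b => cont (wr B d (m a - m b)%Z m)
    | IMul d a b => cont (wr B d (m a * m b)%Z m)
    | IDiv d a b => cont (wr B d (m a / m b)%Z m)
    | IMod d a b => cont (wr B d (m a mod m b)%Z m)
    | ILoad d a =>
        match addr (m a) with
        | Some x => cont (wr B d (m x) m) | None => None end
    | IStore a s =>
        match addr (m a) with
        | Some x => cont (wr B x (m s) m) | None => None end
    | IJz a t => Some (inl (if Z.eqb (m a) 0 then t else S pc, m, []))
    | IJmp t => Some (inl (t, m, []))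
    | IOracle d a =>
        match addr (m a) with
        | Some b => option_map (fun m' => inl (S pc, m', [inst_size m b]))
                      (wr B d (oracle_answer m b) m)
        | None => None end
    | IHalt => Some (inr m)
    end
  end.

Fixpoint run (prog : list instr) (B : Z) (fuel : nat) (pc : nat) (m : memory)
  : option (memory * nat * list nat) :=
  match fuel with
  | O => None
  | S f =>
    match step prog B pc m with
    | None => None
    | Some (inr m') => Some (m', 1, [])
    | Some (inl (pc', m', qs)) =>
        match run prog B f pc' m' with
        | None => None
        | Some (mf, t, qs') => Some (mf, S t, qs ++ qs')
        end
    end
  end.

Definition word_bound (K n : nat) : Z := (Z.of_nat (n + 2) ^ Z.of_nat K)%Z.

Definition cost (eps : R) (t : nat) (qs : list nat) : R :=
  (INR t + fold_right (fun q acc => Rpower (INR q) (3 - eps) + acc) 0 qs)%R.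

Definition subcubic_reduction_ZWTP_to_NWTP (c : nat) : Prop :=
  exists (prog : list instr) (K : nat),
    (forall n E w, valid_input c n E w ->
       exists fuel mf t qs,
         run prog (word_bound K n) fuel 0 (encode n E w) = Some (mf, t, qs) /\
         mf 0 = (if Nat.odd (zero_tri_count n E w) then 1%Z else 0%Z)) /\
    (forall eps : R, (0 < eps)%R ->
       exists eps' : R, (0 < eps')%R /\
       exists (C : R) (n0 : nat),
         forall n E w fuel mf t qs, n0 <= n -> valid_input c n E w ->
           run prog (word_bound K n) fuel 0 (encode n E w) = Some (mf, t, qs) ->
           (cost eps t qs <= C * Rpower (INR n) (3 - eps'))%R).

(* A triangle of weight s has weight 4s - 3 once every edge weight w is
   replaced by 4w - 1, and 4s - 3 < 0 iff s <= 0.  Hence the number of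
   zero-weight triangles is the number of negative triangles for the weights
   4w - 1 minus the number of negative triangles for w, and its parity is the
   xor of the answers of two oracle calls of size n.  The machine rewrites the
   weights in place in O(n^2) steps, so the total cost is
   O(n^2) + 2 n^(3-eps) = O(n^(3-min(eps,1))). *)

From Stdlib Require Import ZArith List Reals Arith Lia Lra Bool.
Import ListNotations.

(** * Triangle counts *)

Lemma tri_count_ext n E w w' P Q :
  (forall i j k, P (w' i j + w' i k + w' j k)%Z = Q (w i j + w i k + w j k)%Z) ->
  tri_count n E w' P = tri_count n E w Q.
Proof.
  intros H. unfold tri_count. f_equal. apply filter_ext.
  intros [[i j] k]. rewrite H. reflexivity.
Qed.

Lemma tri_count_disjoint_union n E w P Q R :
  (forall s, P s = Q s || R s) -> (forall s, Q s && R s = false) ->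
  tri_count n E w P = tri_count n E w Q + tri_count n E w R.
Proof.
  intros HP HQR. unfold tri_count.
  induction (triples n) as [|[[i j] k] l IH]; simpl; auto.
  rewrite HP. specialize (HQR (w i j + w i k + w j k)%Z).
  destruct ((i <? j) && (j <? k) && E i j && E i k && E j k); simpl; [|exact IH].
  destruct (Q _), (R _); simpl in *; try discriminate; rewrite IH; lia.
Qed.

Lemma neg_tri_count_shift n E w :
  neg_tri_count n E (fun i j => 4 * w i j - 1)%Z
  = zero_tri_count n E w + neg_tri_count n E w.
Proof.
  unfold neg_tri_count, zero_tri_count.
  rewrite (tri_count_ext n E w _ _ (fun s => s <=? 0)%Z).
  - apply tri_count_disjoint_union; intros s;
      destruct (Z.leb_spec s 0), (Z.eqb_spec s 0), (Z.ltb_spec s 0); simpl; lia.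
  - intros i j k.
    destruct (Z.leb_spec (w i j + w i k + w j k) 0),
      (Z.ltb_spec (4 * w i j - 1 + (4 * w i k - 1) + (4 * w j k - 1)) 0); lia.
Qed.

Lemma zero_tri_count_small n E w : n < 3 -> zero_tri_count n E w = 0.
Proof. intros H. destruct n as [|[|[|n]]]; [reflexivity.. | lia]. Qed.

Definition par (k : nat) : Z := if Nat.odd k then 1%Z else 0%Z.

Lemma par_01 k : par k = 0%Z \/ par k = 1%Z.
Proof. unfold par. destruct (Nat.odd k); auto. Qed.

Lemma par_add_sq p q :
  ((par (p + q) - par q) * (par (p + q) - par q))%Z = par p.
Proof.
  unfold par. rewrite Nat.odd_add.
  destruct (Nat.odd p), (Nat.odd q); reflexivity.
Qed.

(** * Machine semantics *)

Section Machine.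

Variables (prog : list instr) (B : Z).

Inductive steps : nat -> memory -> nat -> list nat -> nat -> memory -> Prop :=
| steps_refl pc m : steps pc m 0 [] pc m
| steps_step pc m pc1 m1 q k qs pc' m' :
    step prog B pc m = Some (inl (pc1, m1, q)) ->
    steps pc1 m1 k qs pc' m' ->
    steps pc m (S k) (q ++ qs) pc' m'.

Lemma steps_silent pc m pc1 m1 k qs pc' m' :
  step prog B pc m = Some (inl (pc1, m1, [])) ->
  steps pc1 m1 k qs pc' m' -> steps pc m (S k) qs pc' m'.
Proof. apply (steps_step pc m pc1 m1 []). Qed.

Lemma steps_call pc m pc1 m1 s k qs pc' m' :
  step prog B pc m = Some (inl (pc1, m1, [s])) ->
  steps pc1 m1 k qs pc' m' -> steps pc m (S k) (s :: qs) pc' m'.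
Proof. apply (steps_step pc m pc1 m1 [s]). Qed.

Lemma steps_trans pc m k1 qs1 pc1 m1 k2 qs2 pc2 m2 :
  steps pc m k1 qs1 pc1 m1 -> steps pc1 m1 k2 qs2 pc2 m2 ->
  steps pc m (k1 + k2) (qs1 ++ qs2) pc2 m2.
Proof.
  induction 1; intros; simpl; auto.
  rewrite <- app_assoc. econstructor; eauto.
Qed.

Lemma run_steps pc m k qs pc' m' :
  steps pc m k qs pc' m' -> forall f,
  run prog B (k + f) pc m = match run prog B f pc' m' with
    | None => None
    | Some (mf, t, qs') => Some (mf, k + t, qs ++ qs') end.
Proof.
  induction 1; intros f; simpl.
  - destruct (run prog B f pc m) as [[[mf t] qs']|]; reflexivity.
  - rewrite H, IHsteps.
    destruct (run prog B f pc' m') as [[[mf t] qs']|]; simpl; auto.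
    rewrite app_assoc. reflexivity.
Qed.

Lemma run_steps_short pc m k qs pc' m' :
  steps pc m k qs pc' m' -> forall f, f <= k -> run prog B f pc m = None.
Proof.
  induction 1; intros f Hf.
  - replace f with 0 by lia. reflexivity.
  - destruct f; [reflexivity|]. simpl. rewrite H, IHsteps by lia. reflexivity.
Qed.

(* Runs are deterministic, so every halting run with any fuel reports the
   same time and oracle calls as the one following the given trace. *)
Lemma run_steps_to_halt pc m k qs pcH mH :
  steps pc m k qs pcH mH -> nth_error prog pcH = Some IHalt ->
  run prog B (k + 1) pc m = Some (mH, k + 1, qs) /\
  forall f mf t qs', run prog B f pc m = Some (mf, t, qs') -> t = k + 1 /\ qs' = qs.
Proof.
  intros Hs Hh.
  assert (Hrun : forall f, run prog B (k + S f) pc m = Some (mH, k + 1, qs)).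
  { intros f. rewrite (run_steps _ _ _ _ _ _ Hs). simpl. unfold step. rewrite Hh.
    rewrite app_nil_r. reflexivity. }
  split; [apply Hrun|].
  intros f mf t qs' Hr.
  destruct (le_lt_dec f k) as [Hf|Hf].
  - rewrite (run_steps_short _ _ _ _ _ _ Hs f Hf) in Hr. discriminate.
  - replace f with (k + S (f - k - 1)) in Hr by lia.
    rewrite Hrun in Hr. inversion Hr. auto.
Qed.

Lemma upd_eq m a v : upd m a v a = v.
Proof. unfold upd. rewrite Nat.eqb_refl. reflexivity. Qed.

Lemma upd_ne m a v x : x <> a -> upd m a v x = m x.
Proof. intros H. unfold upd. destruct (Nat.eqb_spec x a); congruence. Qed.

Lemma wr_small d v m : (Z.abs v <= B)%Z -> wr B d v m = Some (upd m d v).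
Proof. intros H. unfold wr. apply Z.leb_le in H. rewrite H. reflexivity. Qed.

Lemma addr_of_nat x : addr (Z.of_nat x) = Some x.
Proof.
  unfold addr. replace (0 <=? Z.of_nat x)%Z with true by (symmetry; apply Z.leb_le; lia).
  rewrite Nat2Z.id. reflexivity.
Qed.

Variables (pc : nat) (m : memory).

Lemma step_const d v : nth_error prog pc = Some (IConst d v) ->
  (Z.abs v <= B)%Z -> step prog B pc m = Some (inl (S pc, upd m d v, [])).
Proof. intros H1 H2. unfold step. rewrite H1, wr_small; auto. Qed.

Lemma step_add d a b v : nth_error prog pc = Some (IAdd d a b) ->
  (m a + m b)%Z = v -> (Z.abs v <= B)%Z ->
  step prog B pc m = Some (inl (S pc, upd m d v, [])).
Proof. intros H1 <- H2. unfold step. rewrite H1, wr_small; auto. Qed.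

Lemma step_sub d a b v : nth_error prog pc = Some (ISub d a b) ->
  (m a - m b)%Z = v -> (Z.abs v <= B)%Z ->
  step prog B pc m = Some (inl (S pc, upd m d v, [])).
Proof. intros H1 <- H2. unfold step. rewrite H1, wr_small; auto. Qed.

Lemma step_mul d a b v : nth_error prog pc = Some (IMul d a b) ->
  (m a * m b)%Z = v -> (Z.abs v <= B)%Z ->
  step prog B pc m = Some (inl (S pc, upd m d v, [])).
Proof. intros H1 <- H2. unfold step. rewrite H1, wr_small; auto. Qed.

Lemma step_div d a b v : nth_error prog pc = Some (IDiv d a b) ->
  (m a / m b)%Z = v -> (Z.abs v <= B)%Z ->
  step prog B pc m = Some (inl (S pc, upd m d v, [])).
Proof. intros H1 <- H2. unfold step. rewrite H1, wr_small; auto. Qed.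

Lemma step_mod d a b v : nth_error prog pc = Some (IMod d a b) ->
  (m a mod m b)%Z = v -> (Z.abs v <= B)%Z ->
  step prog B pc m = Some (inl (S pc, upd m d v, [])).
Proof. intros H1 <- H2. unfold step. rewrite H1, wr_small; auto. Qed.

Lemma step_load d a x v : nth_error prog pc = Some (ILoad d a) ->
  m a = Z.of_nat x -> m x = v -> (Z.abs v <= B)%Z ->
  step prog B pc m = Some (inl (S pc, upd m d v, [])).
Proof. intros H1 H0 <- H2. unfold step. rewrite H1, H0, addr_of_nat, wr_small; auto. Qed.

Lemma step_store a s x v : nth_error prog pc = Some (IStore a s) ->
  m a = Z.of_nat x -> m s = v -> (Z.abs v <= B)%Z ->
  step prog B pc m = Some (inl (S pc, upd m x v, [])).
Proof. intros H1 H0 <- H2. unfold step. rewrite H1, H0, addr_of_nat, wr_small; auto. Qed.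

Lemma step_jz_taken a t : nth_error prog pc = Some (IJz a t) ->
  m a = 0%Z -> step prog B pc m = Some (inl (t, m, [])).
Proof. intros H1 H0. unfold step. rewrite H1, H0. reflexivity. Qed.

Lemma step_jz_not_taken a t : nth_error prog pc = Some (IJz a t) ->
  m a <> 0%Z -> step prog B pc m = Some (inl (S pc, m, [])).
Proof. intros H1 H0. unfold step. rewrite H1. apply Z.eqb_neq in H0. rewrite H0. reflexivity. Qed.

Lemma step_jmp t : nth_error prog pc = Some (IJmp t) ->
  step prog B pc m = Some (inl (t, m, [])).
Proof. intros H1. unfold step. rewrite H1. reflexivity. Qed.

Lemma step_oracle d a b v s : nth_error prog pc = Some (IOracle d a) ->
  m a = Z.of_nat b -> oracle_answer m b = v -> inst_size m b = s -> (Z.abs v <= B)%Z ->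
  step prog B pc m = Some (inl (S pc, upd m d v, [s])).
Proof. intros H1 H0 <- <- H2. unfold step. rewrite H1, H0, addr_of_nat, wr_small; auto. Qed.

End Machine.

Arguments steps_trans {prog B pc m k1 qs1 pc1 m1 k2 qs2 pc2 m2}.
Arguments run_steps_to_halt {prog B pc m k qs pcH mH}.

(** * The input encoding *)

Lemma in_triples n i j k : In (i, j, k) (triples n) -> i < n /\ j < n /\ k < n.
Proof.
  unfold triples. intros H.
  apply in_flat_map in H as [i' [Hi H]].
  apply in_flat_map in H as [j' [Hj H]].
  apply in_map_iff in H as [k' [Heq Hk]]. inversion Heq; subst.
  apply in_seq in Hi, Hj, Hk. lia.
Qed.

Lemma divmod_row_col n i j : j < n -> (i * n + j) / n = i /\ (i * n + j) mod n = j.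
Proof.
  intros Hj. split.
  - rewrite Nat.div_add_l, Nat.div_small; lia.
  - rewrite Nat.add_comm, Nat.Div0.mod_add. apply Nat.mod_small; lia.
Qed.

Lemma encode_adj n E w i j : i < n -> j < n ->
  encode n E w (1 + i * n + j) = if E i j then 1%Z else 0%Z.
Proof.
  intros Hi Hj. unfold encode.
  replace (1 + i * n + j =? 0) with false by (symmetry; apply Nat.eqb_neq; lia).
  replace (1 + i * n + j <=? n * n) with true by (symmetry; apply Nat.leb_le; nia).
  replace (1 + i * n + j - 1) with (i * n + j) by lia.
  destruct (divmod_row_col n i j Hj) as [-> ->]. reflexivity.
Qed.

Lemma encode_weight n E w i j : i < n -> j < n ->
  encode n E w (1 + n * n + i * n + j) = if E i j then w i j else 0%Z.
Proof.
  intros Hi Hj. unfold encode.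
  replace (1 + n * n + i * n + j =? 0) with false by (symmetry; apply Nat.eqb_neq; lia).
  replace (1 + n * n + i * n + j <=? n * n) with false by (symmetry; apply Nat.leb_gt; nia).
  replace (1 + n * n + i * n + j <=? 2 * (n * n)) with true by (symmetry; apply Nat.leb_le; nia).
  replace (1 + n * n + i * n + j - 1 - n * n) with (i * n + j) by lia.
  destruct (divmod_row_col n i j Hj) as [-> ->]. reflexivity.
Qed.

Lemma encode_bound c n E w x : valid_input c n E w ->
  (Z.abs (encode n E w x) <= Z.of_nat n + (Z.of_nat n + 1) ^ Z.of_nat c)%Z.
Proof.
  intros [_ [_ Hb]].
  pose proof (Z.pow_pos_nonneg (Z.of_nat n + 1) (Z.of_nat c)).
  unfold encode.
  destruct (x =? 0) eqn:Hx0; [lia|]. apply Nat.eqb_neq in Hx0.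
  destruct (x <=? n * n) eqn:Hx1; [destruct (E _ _); lia|].
  destruct (x <=? 2 * (n * n)) eqn:Hx2; [|lia].
  apply Nat.leb_le in Hx2. apply Nat.leb_gt in Hx1.
  destruct (E _ _) eqn:HE; [|lia].
  assert (Hn : n <> 0) by (intros ->; simpl in Hx2; lia).
  pose proof (Nat.Div0.div_lt_upper_bound (x - 1 - n * n) n n ltac:(lia)).
  pose proof (Nat.mod_upper_bound (x - 1 - n * n) n Hn).
  specialize (Hb _ _ H0 H1 HE). rewrite Nat2Z.inj_add in Hb. simpl in Hb. lia.
Qed.

(* The oracle only reads the cells of pairs i < j, and a weight cell only
   when the edge is present. *)
Lemma oracle_answer_base0 n (E : nat -> nat -> bool) (w' : nat -> nat -> Z) (m : memory) :
  m 0 = Z.of_nat n ->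
  (forall i j, i < j -> j < n -> m (1 + i * n + j) = if E i j then 1%Z else 0%Z) ->
  (forall i j, i < j -> j < n -> E i j = true -> m (1 + n * n + i * n + j) = w' i j) ->
  oracle_answer m 0 = par (neg_tri_count n E w').
Proof.
  intros H0 H1 H2. unfold oracle_answer, inst_E, inst_w, inst_size, par.
  rewrite H0, Nat2Z.id.
  replace (neg_tri_count n _ _) with (neg_tri_count n E w'); [reflexivity|].
  unfold neg_tri_count, tri_count. symmetry. f_equal. apply filter_ext_in.
  intros [[i j] k] Hin. apply in_triples in Hin.
  destruct (Nat.ltb_spec i j), (Nat.ltb_spec j k); simpl; try reflexivity.
  replace (S (i * n + j)) with (1 + i * n + j) by lia.
  replace (S (i * n + k)) with (1 + i * n + k) by lia.
  replace (S (j * n + k)) with (1 + j * n + k) by lia.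
  replace (S (n * n + i * n + j)) with (1 + n * n + i * n + j) by lia.
  replace (S (n * n + i * n + k)) with (1 + n * n + i * n + k) by lia.
  replace (S (n * n + j * n + k)) with (1 + n * n + j * n + k) by lia.
  rewrite !H1 by lia.
  destruct (E i j) eqn:E1, (E i k) eqn:E2, (E j k) eqn:E3; try reflexivity.
  rewrite !H2 by (auto; lia). reflexivity.
Qed.

(** * The reduction program *)

(* Register arguments are fixed addresses, hence lie inside the instance for
   large n, and cell 1 (the diagonal bit of vertex 0) is the only such cell
   the oracle ignores.  The program
   - 0-6:   jumps to 57-58, which output 0, if n < 3;
   - 7-8:   calls the oracle on the input, giving bit := cell 1;
   - 9-27:  saves cells 2..5 at H := (2n + bit)^2 (computed from cells 0, 1
            alone, which is why H depends on bit) and bit at 3n^2;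
   - 28-36: replaces each weight cell x by 4x - 1 (cell 1 counts down from
            2n^2 to n^2; cell 2 holds 1, cell 3 holds n^2, cell 4 is scratch);
   - 37-48: restores cells 2..5;
   - 49-56: calls the oracle again, giving p, and outputs (p - bit)^2, the
            xor of the two answers. *)
Definition prog : list instr := [
 (*0*) IJz 0 57; IConst 1 1; ISub 1 0 1; IJz 1 57; IConst 1 2; ISub 1 0 1; IJz 1 57;
 (*7*) IConst 1 0; IOracle 1 1; IAdd 0 0 0; IAdd 0 0 1; IMul 1 0 0;
 (*12*) IStore 1 2; IConst 2 1; IAdd 1 1 2; IStore 1 3; IAdd 1 1 2; IStore 1 4;
 (*18*) IAdd 1 1 2; IStore 1 5; IAdd 3 2 2; IMod 5 0 3; IDiv 0 0 3; IMul 3 0 0;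
 (*24*) IAdd 1 3 3; IAdd 1 1 3; IStore 1 5; IAdd 1 3 3;
 (*28*) ISub 4 1 3; IJz 4 37; ILoad 4 1; IAdd 4 4 4; IAdd 4 4 4; ISub 4 4 2;
 (*34*) IStore 1 4; ISub 1 1 2; IJmp 28;
 (*37*) IAdd 4 0 0; IAdd 4 4 5; IMul 1 4 4; IConst 5 1; ILoad 2 1; IAdd 1 1 5;
 (*43*) ILoad 3 1; IAdd 1 1 5; ILoad 4 1; IAdd 1 1 5; ILoad 5 1; IConst 1 0;
 (*49*) IOracle 1 1; IMul 2 0 0; IAdd 3 2 2; IAdd 3 3 2; ILoad 4 3; ISub 2 1 4;
 (*55*) IMul 0 2 2; IHalt; IConst 0 0; IHalt ].

Lemma word_bound_small c n v : (Z.abs v <= 2)%Z -> (Z.abs v <= word_bound (c + 3) n)%Z.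
Proof.
  intros H. unfold word_bound.
  rewrite (Nat2Z.inj_add c 3), Z.pow_add_r by lia.
  pose proof (Z.pow_pos_nonneg (Z.of_nat (n + 2)) (Z.of_nat c) ltac:(lia) ltac:(lia)).
  assert ((2 ^ 3 <= Z.of_nat (n + 2) ^ Z.of_nat 3)%Z) by (apply Z.pow_le_mono_l; lia).
  simpl in *. nia.
Qed.

Lemma word_bound_large c n v : 3 <= n ->
  (Z.abs v <= 4 * (Z.of_nat n + 1) ^ Z.of_nat c + 4 * (Z.of_nat n + 1) * (Z.of_nat n + 1)
              + 4 * Z.of_nat n + 16)%Z ->
  (Z.abs v <= word_bound (c + 3) n)%Z.
Proof.
  intros Hn H. unfold word_bound.
  rewrite (Nat2Z.inj_add c 3), Z.pow_add_r by lia.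
  assert (((Z.of_nat n + 1) ^ Z.of_nat c <= Z.of_nat (n + 2) ^ Z.of_nat c)%Z)
    by (apply Z.pow_le_mono_l; lia).
  pose proof (Z.pow_pos_nonneg (Z.of_nat n + 1) (Z.of_nat c) ltac:(lia) ltac:(lia)).
  replace (Z.of_nat (n + 2) ^ Z.of_nat 3)%Z
    with ((Z.of_nat n + 2) * (Z.of_nat n + 2) * (Z.of_nat n + 2))%Z
    by (rewrite Nat2Z.inj_add; change (Z.of_nat 3) with 3%Z; change (Z.of_nat 2) with 2%Z; ring).
  set (X := (Z.of_nat (n + 2) ^ Z.of_nat c)%Z) in *.
  set (W := ((Z.of_nat n + 1) ^ Z.of_nat c)%Z) in *.
  nia.
Qed.

Ltac upd_simpl := repeat (first [rewrite upd_eq | rewrite upd_ne by lia]).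
Ltac word_bounded := apply word_bound_large; [assumption|].
Ltac word_bounded_small := apply word_bound_small; lia.

Lemma run_small c n E w : n < 3 ->
  exists k mH, steps prog (word_bound (c + 3) n) 0 (encode n E w) k [] 58 mH /\
    mH 0 = 0%Z /\ k <= 9.
Proof.
  intros Hn.
  assert (He0 : encode n E w 0 = Z.of_nat n) by reflexivity.
  destruct n as [|[|[|n]]]; [..|lia]; do 2 eexists; split.
  2, 4, 6: shelve.
  - eapply steps_silent.
    { eapply step_jz_taken; [reflexivity|exact He0]. }
    eapply steps_silent.
    { eapply step_const; [reflexivity|word_bounded_small]. }
    apply steps_refl.
  - eapply steps_silent.
    { eapply step_jz_not_taken; [reflexivity|rewrite He0; simpl; lia]. }
    eapply steps_silent.
    { eapply step_const; [reflexivity|word_bounded_small]. }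
    eapply steps_silent.
    { eapply step_sub with (v := 0%Z);
        [reflexivity|upd_simpl; rewrite He0; reflexivity|word_bounded_small]. }
    eapply steps_silent.
    { eapply step_jz_taken; [reflexivity|upd_simpl; reflexivity]. }
    eapply steps_silent.
    { eapply step_const; [reflexivity|word_bounded_small]. }
    apply steps_refl.
  - eapply steps_silent.
    { eapply step_jz_not_taken; [reflexivity|rewrite He0; simpl; lia]. }
    eapply steps_silent.
    { eapply step_const; [reflexivity|word_bounded_small]. }
    eapply steps_silent.
    { eapply step_sub with (v := 1%Z);
        [reflexivity|upd_simpl; rewrite He0; reflexivity|word_bounded_small]. }
    eapply steps_silent.
    { eapply step_jz_not_taken; [reflexivity|upd_simpl; lia]. }
    eapply steps_silent.
    { eapply step_const; [reflexivity|word_bounded_small]. }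
    eapply steps_silent.
    { eapply step_sub with (v := 0%Z);
        [reflexivity|upd_simpl; rewrite He0; reflexivity|word_bounded_small]. }
    eapply steps_silent.
    { eapply step_jz_taken; [reflexivity|upd_simpl; reflexivity]. }
    eapply steps_silent.
    { eapply step_const; [reflexivity|word_bounded_small]. }
    apply steps_refl.
  Unshelve. all: split; [upd_simpl; reflexivity | lia].
Qed.

Section LargeInput.

Variables (c n : nat) (E : nat -> nat -> bool) (w : nat -> nat -> Z).
Hypotheses (Hvalid : valid_input c n E w) (Hn : 3 <= n).

Definition shifted_instance (m : memory) : Prop :=
  m 0 = Z.of_nat n /\
  (forall x, 2 <= x <= n * n -> m x = encode n E w x) /\
  (forall x, n * n < x <= n * n + n * n -> m x = (4 * encode n E w x - 1)%Z).

Lemma oracle_answer_input m : m 0 = Z.of_nat n ->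
  (forall x, 2 <= x <= n * n + n * n -> m x = encode n E w x) ->
  oracle_answer m 0 = par (neg_tri_count n E w).
Proof.
  intros H0 Hm. apply oracle_answer_base0; [exact H0| |].
  - intros i j Hij Hj. rewrite Hm by nia. apply encode_adj; lia.
  - intros i j Hij Hj HE. rewrite Hm, encode_weight, HE by nia. reflexivity.
Qed.

Lemma oracle_answer_shifted m : shifted_instance m ->
  oracle_answer m 0 = par (neg_tri_count n E (fun i j => 4 * w i j - 1)%Z).
Proof.
  intros [H0 [Hadj Hwt]]. apply oracle_answer_base0; [exact H0| |].
  - intros i j Hij Hj. rewrite Hadj by nia. apply encode_adj; lia.
  - intros i j Hij Hj HE. rewrite Hwt, encode_weight, HE by nia. reflexivity.
Qed.

Lemma run_first_call : exists m,
  steps prog (word_bound (c + 3) n) 0 (encode n E w) 9 [n] 9 m /\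
  m 0 = Z.of_nat n /\ m 1 = par (neg_tri_count n E w) /\
  forall x, x <> 1 -> m x = encode n E w x.
Proof.
  assert (He0 : encode n E w 0 = Z.of_nat n) by reflexivity.
  pose proof (par_01 (neg_tri_count n E w)).
  eexists. split.
  { eapply steps_silent.
    { eapply step_jz_not_taken; [reflexivity|rewrite He0; lia]. }
    eapply steps_silent.
    { eapply step_const; [reflexivity|word_bounded; lia]. }
    eapply steps_silent.
    { eapply step_sub with (v := (Z.of_nat n - 1)%Z);
        [reflexivity|upd_simpl; rewrite He0; lia|word_bounded; lia]. }
    eapply steps_silent.
    { eapply step_jz_not_taken; [reflexivity|upd_simpl; lia]. }
    eapply steps_silent.
    { eapply step_const; [reflexivity|word_bounded; lia]. }
    eapply steps_silent.
    { eapply step_sub with (v := (Z.of_nat n - 2)%Z);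
        [reflexivity|upd_simpl; rewrite He0; lia|word_bounded; lia]. }
    eapply steps_silent.
    { eapply step_jz_not_taken; [reflexivity|upd_simpl; lia]. }
    eapply steps_silent.
    { eapply step_const; [reflexivity|word_bounded; lia]. }
    eapply steps_call.
    { eapply step_oracle with (b := 0) (v := par (neg_tri_count n E w));
        [reflexivity|upd_simpl; reflexivity| |unfold inst_size; upd_simpl; apply Nat2Z.id
        |word_bounded; lia].
      apply oracle_answer_input; [upd_simpl; exact He0|].
      intros x Hx. upd_simpl. reflexivity. }
    apply steps_refl. }
  repeat split; upd_simpl; auto.
  intros x Hx. upd_simpl. reflexivity.
Qed.

Section Rewriting.

Variables (bit H : nat).
Hypotheses (Hbit : bit <= 1) (HH : H = (2 * n + bit) * (2 * n + bit)).

Lemma save_area_large : 4 * (n * n) <= H /\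
  (Z.of_nat H + 3 <= 4 * (Z.of_nat n + 1) * (Z.of_nat n + 1))%Z.
Proof. subst H. split; nia. Qed.

(* Cell 1 walks down the weight cells; those above it are already rewritten. *)
Record loop_inv (k : nat) (m : memory) : Prop := {
  inv_size : m 0 = Z.of_nat n;
  inv_ptr : m 1 = Z.of_nat (n * n + k);
  inv_one : m 2 = 1%Z;
  inv_end : m 3 = Z.of_nat (n * n);
  inv_bit : m 5 = Z.of_nat bit;
  inv_bit_saved : m (n * n + n * n + n * n) = Z.of_nat bit;
  inv_saved : forall i, i < 4 -> m (H + i) = encode n E w (2 + i);
  inv_todo : forall x, 6 <= x <= n * n + k -> m x = encode n E w x;
  inv_done : forall x, n * n + k < x <= n * n + n * n -> m x = (4 * encode n E w x - 1)%Z
}.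

Lemma encode_divmod_two :
  (Z.of_nat (2 * n + bit) mod 2 = Z.of_nat bit /\ Z.of_nat (2 * n + bit) / 2 = Z.of_nat n)%Z.
Proof.
  split; symmetry.
  - apply (Z.mod_unique _ _ (Z.of_nat n)); lia.
  - apply (Z.div_unique _ _ _ (Z.of_nat bit)); lia.
Qed.

Lemma run_save m : m 0 = Z.of_nat n -> m 1 = Z.of_nat bit ->
  (forall x, x <> 1 -> m x = encode n E w x) ->
  exists m', steps prog (word_bound (c + 3) n) 9 m 19 [] 28 m' /\ loop_inv (n * n) m'.
Proof.
  intros H0 H1 Hm.
  assert (HN : 9 <= n * n) by nia.
  destruct save_area_large as [HHN HHZ].
  destruct encode_divmod_two as [Hmod Hdiv].
  pose proof (encode_bound c n E w 2 Hvalid). pose proof (encode_bound c n E w 3 Hvalid).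
  pose proof (encode_bound c n E w 4 Hvalid). pose proof (encode_bound c n E w 5 Hvalid).
  eexists. split.
  { eapply steps_silent.
    { eapply step_add with (v := Z.of_nat (2 * n)); [reflexivity|upd_simpl; lia|word_bounded; lia]. }
    eapply steps_silent.
    { eapply step_add with (v := Z.of_nat (2 * n + bit));
        [reflexivity|upd_simpl; lia|word_bounded; lia]. }
    eapply steps_silent.
    { eapply step_mul with (v := Z.of_nat H); [reflexivity|upd_simpl; subst H; lia|word_bounded; lia]. }
    eapply steps_silent.
    { eapply step_store with (x := H) (v := encode n E w 2);
        [reflexivity|upd_simpl; reflexivity|upd_simpl; apply Hm; lia|word_bounded; lia]. }
    eapply steps_silent.
    { eapply step_const; [reflexivity|word_bounded; lia]. }
    eapply steps_silent.
    { eapply step_add with (v := Z.of_nat (H + 1)); [reflexivity|upd_simpl; lia|word_bounded; lia]. }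
    eapply steps_silent.
    { eapply step_store with (x := H + 1) (v := encode n E w 3);
        [reflexivity|upd_simpl; reflexivity|upd_simpl; apply Hm; lia|word_bounded; lia]. }
    eapply steps_silent.
    { eapply step_add with (v := Z.of_nat (H + 2)); [reflexivity|upd_simpl; lia|word_bounded; lia]. }
    eapply steps_silent.
    { eapply step_store with (x := H + 2) (v := encode n E w 4);
        [reflexivity|upd_simpl; reflexivity|upd_simpl; apply Hm; lia|word_bounded; lia]. }
    eapply steps_silent.
    { eapply step_add with (v := Z.of_nat (H + 3)); [reflexivity|upd_simpl; lia|word_bounded; lia]. }
    eapply steps_silent.
    { eapply step_store with (x := H + 3) (v := encode n E w 5);
        [reflexivity|upd_simpl; reflexivity|upd_simpl; apply Hm; lia|word_bounded; lia]. }
    eapply steps_silent.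
    { eapply step_add with (v := 2%Z); [reflexivity|upd_simpl; lia|word_bounded; lia]. }
    eapply steps_silent.
    { eapply step_mod with (v := Z.of_nat bit); [reflexivity|upd_simpl; exact Hmod|word_bounded; lia]. }
    eapply steps_silent.
    { eapply step_div with (v := Z.of_nat n); [reflexivity|upd_simpl; exact Hdiv|word_bounded; lia]. }
    eapply steps_silent.
    { eapply step_mul with (v := Z.of_nat (n * n)); [reflexivity|upd_simpl; lia|word_bounded; nia]. }
    eapply steps_silent.
    { eapply step_add with (v := Z.of_nat (n * n + n * n));
        [reflexivity|upd_simpl; lia|word_bounded; nia]. }
    eapply steps_silent.
    { eapply step_add with (v := Z.of_nat (n * n + n * n + n * n));
        [reflexivity|upd_simpl; lia|word_bounded; nia]. }
    eapply steps_silent.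
    { eapply step_store with (x := n * n + n * n + n * n) (v := Z.of_nat bit);
        [reflexivity|upd_simpl; reflexivity|upd_simpl; reflexivity|word_bounded; lia]. }
    eapply steps_silent.
    { eapply step_add with (v := Z.of_nat (n * n + n * n));
        [reflexivity|upd_simpl; lia|word_bounded; nia]. }
    apply steps_refl. }
  constructor; upd_simpl; auto.
  - intros i Hi. destruct i as [|[|[|[|i]]]]; [..|lia]; rewrite ?Nat.add_0_r; upd_simpl; reflexivity.
  - intros x Hx. upd_simpl. apply Hm. lia.
  - intros x Hx. lia.
Qed.

Lemma run_loop_body k m : S k <= n * n -> loop_inv (S k) m ->
  exists m', steps prog (word_bound (c + 3) n) 28 m 9 [] 28 m' /\ loop_inv k m'.
Proof.
  intros Hk [I0 I1 I2 I3 I5 Ibit Isaved Itodo Idone].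
  assert (HN : 9 <= n * n) by nia.
  destruct save_area_large as [HHN _].
  set (a := n * n + S k).
  assert (Ha : m a = encode n E w a) by (apply Itodo; lia).
  pose proof (encode_bound c n E w a Hvalid).
  eexists. split.
  { eapply steps_silent.
    { eapply step_sub with (v := Z.of_nat (S k));
        [reflexivity|upd_simpl; rewrite I1, I3; lia|word_bounded; nia]. }
    eapply steps_silent.
    { eapply step_jz_not_taken; [reflexivity|upd_simpl; lia]. }
    eapply steps_silent.
    { eapply step_load with (x := a) (v := encode n E w a);
        [reflexivity|upd_simpl; exact I1|upd_simpl; exact Ha|word_bounded; lia]. }
    eapply steps_silent.
    { eapply step_add with (v := (2 * encode n E w a)%Z);
        [reflexivity|upd_simpl; lia|word_bounded; lia]. }
    eapply steps_silent.
    { eapply step_add with (v := (4 * encode n E w a)%Z);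
        [reflexivity|upd_simpl; lia|word_bounded; lia]. }
    eapply steps_silent.
    { eapply step_sub with (v := (4 * encode n E w a - 1)%Z);
        [reflexivity|upd_simpl; lia|word_bounded; lia]. }
    eapply steps_silent.
    { eapply step_store with (x := a) (v := (4 * encode n E w a - 1)%Z);
        [reflexivity|upd_simpl; exact I1|upd_simpl; reflexivity|word_bounded; lia]. }
    eapply steps_silent.
    { eapply step_sub with (v := Z.of_nat (n * n + k));
        [reflexivity|upd_simpl; rewrite I1, I2; lia|word_bounded; nia]. }
    eapply steps_silent.
    { eapply step_jmp; reflexivity. }
    apply steps_refl. }
  constructor; upd_simpl; auto.
  - intros i Hi. upd_simpl. auto.
  - intros x Hx. upd_simpl. apply Itodo. lia.
  - intros x Hx. destruct (Nat.eq_dec x a) as [->|Hxa]; upd_simpl; [reflexivity|]. apply Idone. lia.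
Qed.

Lemma run_loop_exit m : loop_inv 0 m ->
  exists m', steps prog (word_bound (c + 3) n) 28 m 2 [] 37 m' /\ loop_inv 0 m'.
Proof.
  intros [I0 I1 I2 I3 I5 Ibit Isaved Itodo Idone].
  assert (HN : 9 <= n * n) by nia.
  destruct save_area_large as [HHN _].
  eexists. split.
  { eapply steps_silent.
    { eapply step_sub with (v := 0%Z); [reflexivity|upd_simpl; rewrite I1, I3; lia|word_bounded; lia]. }
    eapply steps_silent.
    { eapply step_jz_taken; [reflexivity|upd_simpl; reflexivity]. }
    apply steps_refl. }
  constructor; upd_simpl; auto.
  - intros i Hi. upd_simpl. auto.
  - intros x Hx. upd_simpl. auto.
  - intros x Hx. upd_simpl. auto.
Qed.

Lemma run_loop k m : k <= n * n -> loop_inv k m ->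
  exists m', steps prog (word_bound (c + 3) n) 28 m (9 * k + 2) [] 37 m' /\ loop_inv 0 m'.
Proof.
  revert m. induction k as [|k IH]; intros m Hk HI.
  - apply run_loop_exit, HI.
  - destruct (run_loop_body k m Hk HI) as [m1 [Hs1 HI1]].
    destruct (IH m1 ltac:(lia) HI1) as [m2 [Hs2 HI2]].
    exists m2. split; [|exact HI2].
    replace (9 * S k + 2) with (9 + (9 * k + 2)) by lia.
    exact (steps_trans Hs1 Hs2).
Qed.

Lemma run_restore m : loop_inv 0 m ->
  exists m', steps prog (word_bound (c + 3) n) 37 m 12 [] 49 m' /\
    shifted_instance m' /\ m' 1 = 0%Z /\ m' (n * n + n * n + n * n) = Z.of_nat bit.
Proof.
  intros [I0 I1 I2 I3 I5 Ibit Isaved Itodo Idone].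
  assert (HN : 9 <= n * n) by nia.
  destruct save_area_large as [HHN HHZ].
  pose proof (encode_bound c n E w 2 Hvalid). pose proof (encode_bound c n E w 3 Hvalid).
  pose proof (encode_bound c n E w 4 Hvalid). pose proof (encode_bound c n E w 5 Hvalid).
  eexists. split.
  { eapply steps_silent.
    { eapply step_add with (v := Z.of_nat (2 * n)); [reflexivity|upd_simpl; lia|word_bounded; lia]. }
    eapply steps_silent.
    { eapply step_add with (v := Z.of_nat (2 * n + bit));
        [reflexivity|upd_simpl; lia|word_bounded; lia]. }
    eapply steps_silent.
    { eapply step_mul with (v := Z.of_nat H); [reflexivity|upd_simpl; subst H; lia|word_bounded; lia]. }
    eapply steps_silent.
    { eapply step_const; [reflexivity|word_bounded; lia]. }
    eapply steps_silent.
    { eapply step_load with (x := H + 0) (v := encode n E w 2);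
        [reflexivity|upd_simpl; f_equal; lia|upd_simpl; apply Isaved; lia|word_bounded; lia]. }
    eapply steps_silent.
    { eapply step_add with (v := Z.of_nat (H + 1)); [reflexivity|upd_simpl; lia|word_bounded; lia]. }
    eapply steps_silent.
    { eapply step_load with (x := H + 1) (v := encode n E w 3);
        [reflexivity|upd_simpl; reflexivity|upd_simpl; apply Isaved; lia|word_bounded; lia]. }
    eapply steps_silent.
    { eapply step_add with (v := Z.of_nat (H + 2)); [reflexivity|upd_simpl; lia|word_bounded; lia]. }
    eapply steps_silent.
    { eapply step_load with (x := H + 2) (v := encode n E w 4);
        [reflexivity|upd_simpl; reflexivity|upd_simpl; apply Isaved; lia|word_bounded; lia]. }
    eapply steps_silent.
    { eapply step_add with (v := Z.of_nat (H + 3)); [reflexivity|upd_simpl; lia|word_bounded; lia]. }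
    eapply steps_silent.
    { eapply step_load with (x := H + 3) (v := encode n E w 5);
        [reflexivity|upd_simpl; reflexivity|upd_simpl; apply Isaved; lia|word_bounded; lia]. }
    eapply steps_silent.
    { eapply step_const; [reflexivity|word_bounded; lia]. }
    apply steps_refl. }
  repeat split; upd_simpl; auto.
  - intros x Hx.
    destruct (Nat.eq_dec x 2) as [->|]; [upd_simpl; reflexivity|].
    destruct (Nat.eq_dec x 3) as [->|]; [upd_simpl; reflexivity|].
    destruct (Nat.eq_dec x 4) as [->|]; [upd_simpl; reflexivity|].
    destruct (Nat.eq_dec x 5) as [->|]; [upd_simpl; reflexivity|].
    upd_simpl. apply Itodo. lia.
  - intros x Hx. upd_simpl. apply Idone. lia.
Qed.

End Rewriting.

Lemma run_second_call bit m : bit <= 1 -> shifted_instance m -> m 1 = 0%Z ->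
  m (n * n + n * n + n * n) = Z.of_nat bit ->
  exists mf, steps prog (word_bound (c + 3) n) 49 m 7 [n] 56 mf /\
    mf 0 = ((par (neg_tri_count n E (fun i j => 4 * w i j - 1)%Z) - Z.of_nat bit) *
            (par (neg_tri_count n E (fun i j => 4 * w i j - 1)%Z) - Z.of_nat bit))%Z.
Proof.
  intros Hbit Hm H1 Hbitm. pose proof Hm as [I0 _].
  assert (HN : 9 <= n * n) by nia.
  set (p := par (neg_tri_count n E (fun i j => 4 * w i j - 1)%Z)).
  pose proof (par_01 (neg_tri_count n E (fun i j => 4 * w i j - 1)%Z)).
  eexists. split.
  { eapply steps_call.
    { eapply step_oracle with (b := 0) (v := p);
        [reflexivity|exact H1|apply oracle_answer_shifted, Hm
        |unfold inst_size; rewrite I0; apply Nat2Z.id|word_bounded; lia]. }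
    eapply steps_silent.
    { eapply step_mul with (v := Z.of_nat (n * n)); [reflexivity|upd_simpl; lia|word_bounded; nia]. }
    eapply steps_silent.
    { eapply step_add with (v := Z.of_nat (n * n + n * n));
        [reflexivity|upd_simpl; lia|word_bounded; nia]. }
    eapply steps_silent.
    { eapply step_add with (v := Z.of_nat (n * n + n * n + n * n));
        [reflexivity|upd_simpl; lia|word_bounded; nia]. }
    eapply steps_silent.
    { eapply step_load with (x := n * n + n * n + n * n) (v := Z.of_nat bit);
        [reflexivity|upd_simpl; reflexivity|upd_simpl; assumption|word_bounded; lia]. }
    eapply steps_silent.
    { eapply step_sub with (v := (p - Z.of_nat bit)%Z);
        [reflexivity|upd_simpl; reflexivity|word_bounded; lia]. }
    eapply steps_silent.
    { eapply step_mul with (v := ((p - Z.of_nat bit) * (p - Z.of_nat bit))%Z);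
        [reflexivity|upd_simpl; reflexivity|word_bounded; nia]. }
    apply steps_refl. }
  upd_simpl. reflexivity.
Qed.

Lemma run_large : exists k mH,
  steps prog (word_bound (c + 3) n) 0 (encode n E w) k [n; n] 56 mH /\
  mH 0 = par (zero_tri_count n E w) /\ k <= 49 + 9 * (n * n).
Proof.
  destruct run_first_call as [m9 [Hs1 [H90 [H91 H9f]]]].
  set (bit := Nat.b2n (Nat.odd (neg_tri_count n E w))).
  assert (Hbit : bit <= 1) by (unfold bit; destruct (Nat.odd _); simpl; lia).
  assert (Hpar : par (neg_tri_count n E w) = Z.of_nat bit)
    by (unfold par, bit; destruct (Nat.odd _); reflexivity).
  rewrite Hpar in H91.
  destruct (run_save bit _ Hbit eq_refl m9 H90 H91 H9f) as [m28 [Hs2 HI]].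
  destruct (run_loop bit _ Hbit eq_refl (n * n) m28 (le_n _) HI) as [m37 [Hs3 HI0]].
  destruct (run_restore bit _ Hbit eq_refl m37 HI0) as [m49 [Hs4 [Hsh [H491 H49b]]]].
  destruct (run_second_call bit m49 Hbit Hsh H491 H49b) as [mf [Hs5 Hmf]].
  pose proof (steps_trans Hs1 (steps_trans Hs2 (steps_trans Hs3 (steps_trans Hs4 Hs5))))
    as Hs; cbn [app] in Hs.
  do 2 eexists. split; [exact Hs|]. split; [|lia].
  rewrite Hmf, <- Hpar, neg_tri_count_shift. apply par_add_sq.
Qed.

End LargeInput.

Lemma run_reduction c n E w : valid_input c n E w ->
  exists k qs pcH mH, steps prog (word_bound (c + 3) n) 0 (encode n E w) k qs pcH mH /\
    nth_error prog pcH = Some IHalt /\ mH 0 = par (zero_tri_count n E w) /\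
    k <= 49 + 9 * (n * n) /\ (qs = [] \/ qs = [n; n]).
Proof.
  intros Hv. destruct (le_lt_dec 3 n) as [Hn|Hn].
  - destruct (run_large c n E w Hv Hn) as [k [mH [Hs [HmH Hk]]]].
    exists k, [n; n], 56, mH. repeat split; auto.
  - destruct (run_small c n E w Hn) as [k [mH [Hs [HmH Hk]]]].
    exists k, [], 58, mH. rewrite zero_tri_count_small by exact Hn.
    repeat split; auto; lia.
Qed.

Lemma cost_reduction eps eps' n k qs : (eps' <= eps)%R -> (eps' <= 1)%R ->
  1 <= n -> k <= 49 + 9 * (n * n) -> (qs = [] \/ qs = [n; n]) ->
  (cost eps (k + 1) qs <= 61 * Rpower (INR n) (3 - eps'))%R.
Proof.
  intros Hle Hle1 Hn Hk Hqs.
  assert (HnR : (1 <= INR n)%R) by (apply (le_INR 1); lia).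
  set (X := Rpower (INR n) (3 - eps')).
  assert (Hsq : (INR n * INR n <= X)%R).
  { unfold X. replace (INR n * INR n)%R with (Rpower (INR n) (INR 2)).
    - apply Rle_Rpower; [lra|]. simpl. lra.
    - rewrite Rpower_pow by lra. simpl. ring. }
  assert (Hcall : (Rpower (INR n) (3 - eps) <= X)%R) by (apply Rle_Rpower; lra).
  assert (Hk' : (INR (k + 1) <= 50 + 9 * (INR n * INR n))%R).
  { replace (50 + 9 * (INR n * INR n))%R with (INR (50 + 9 * (n * n)))
      by (rewrite plus_INR, !mult_INR; simpl; ring).
    apply le_INR. lia. }
  assert (1 <= X)%R by nra.
  unfold cost. destruct Hqs as [-> | ->]; simpl fold_right; fold X; lra.
Qed.

Theorem theorem2 : forall c : nat, subcubic_reduction_ZWTP_to_NWTP c.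
Proof.
  intros c. exists prog, (c + 3). split.
  - intros n E w Hv.
    destruct (run_reduction c n E w Hv) as [k [qs [pcH [mH [Hs [Hh [HmH _]]]]]]].
    destruct (run_steps_to_halt Hs Hh) as [Hrun _].
    exists (k + 1), mH, (k + 1), qs. auto.
  - intros eps Heps. exists (Rmin eps 1). split; [apply Rmin_glb_lt; lra|].
    exists 61%R, 1. intros n E w fuel mf t qs Hn Hv Hr.
    destruct (run_reduction c n E w Hv) as [k [qs0 [pcH [mH [Hs [Hh [_ [Hk Hqs]]]]]]]].
    destruct (run_steps_to_halt Hs Hh) as [_ Huniq].
    destruct (Huniq _ _ _ _ Hr) as [-> ->].
    apply cost_reduction; auto; [apply Rmin_l | apply Rmin_r].
Qed.
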